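(* Let $t\in(1,2]$ and $n\in\mathbb{Z}^{+}$. Then: (a) $k(n,t)\geq \lfloor a(t)n\rfloor$; (b) $k(n,t)>0$ if and only if $n+1\leq t^n$; (c) $l(n,t)\geq \lfloor b(t)n\rfloor$; (d) $l(n,t)>0$ if and only if $2(n+1)\leq t^n$.
   Context: Let $f,g:(0,\infty)\to\mathbb{R}$ be $f(x)=\frac{(1+x)^{1+x}}{x^x}$ and $g(x)=\frac{2^x(1+x)^{1+x}}{x^x}$; both are strictly increasing with $\lim_{x\to0^+}f(x)=\lim_{x\to0^+}g(x)=1$. For $t\in(1,\infty)$, $a(t)$ and $b(t)$ denote the unique solutions $x>0$ of $f(x)=t$ and $g(x)=t$, respectively. For $t\in(1,2]$ and $n\in\mathbb{Z}^+$, $k(n,t)$ is the nonnegative integer with $\binom{n+k(n,t)}{n}\leq t^n<\binom{n+k(n,t)+1}{n}$, and $l(n,t)$ is the nonnegative integer with $2^{l(n,t)}\binom{n+l(n,t)}{n}\leq t^n<2^{l(n,t)+1}\binom{n+l(n,t)+1}{n}$. *)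

From Stdlib Require Import Reals Lra Lia ZArith ClassicalEpsilon.
Open Scope R_scope.

Definition f (x : R) : R := Rpower (1 + x) (1 + x) / Rpower x x.
Definition g (x : R) : R := Rpower 2 x * Rpower (1 + x) (1 + x) / Rpower x x.

(* a(t), b(t): the (unique, for t > 1) solution x > 0 of f x = t, resp. g x = t. *)
Definition a (t : R) : R := epsilon (inhabits 0) (fun x => 0 < x /\ f x = t).
Definition b (t : R) : R := epsilon (inhabits 0) (fun x => 0 < x /\ g x = t).

Definition k (n : nat) (t : R) : nat :=
  epsilon (inhabits 0%nat)
    (fun k => C (n + k) n <= t ^ n < C (n + k + 1) n).

Definition l (n : nat) (t : R) : nat :=
  epsilon (inhabits 0%nat)
    (fun l => 2 ^ l * C (n + l) n <= t ^ n < 2 ^ (l + 1) * C (n + l + 1) n).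

(* floor x as an integer (Int_part x = up x - 1 is the floor). *)
Definition floorZ (x : R) : Z := Int_part x.

(* Write [wbinom c n j = c^j C(n+j,n)], so that [k n t] and [l n t] bracket
   [t^n] between consecutive values of [wbinom 1 n] and [wbinom 2 n].  For
   [c >= 1] this sequence is nondecreasing, so the bracketing index is the
   largest [j] with [wbinom c n j <= t^n]; since [wbinom c n 1 = c (n+1)],
   this gives (b) and (d).  For (a) and (c), the term [C(n+m,n) x^m] of the
   binomial expansion of [(1+x)^(n+m)] shows that [m <= x n] implies
   [wbinom c n m <= (c^x (1+x)^(1+x) / x^x)^n]; at [x = a(t)], resp. [b(t)],
   the right-hand side is [t^n], so [m = floor(x n)] is at most [k n t], resp.
   [l n t].  The roots [a(t)] and [b(t)] exist by the intermediate value
   theorem, as [c^x (1+x)^(1+x) / x^x] tends to 1 at [0+] and exceeds [1+x]. *)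

From Stdlib Require Import Reals Lra Lia ZArith ClassicalEpsilon.
From Coquelicot Require Import Rcomplements Hierarchy Continuity Derive AutoDerive.
Open Scope R_scope.

Section Bracket.

Variable u : nat -> R.

Lemma bracket_exists T N : u 0 <= T -> T < u N -> exists j, u j <= T < u (S j).
Proof.
  intros H0; induction N as [|N IH]; intros HN; [lra|].
  destruct (Rle_or_lt (u N) T) as [HuN | HuN]; [now exists N | now apply IH].
Qed.

Hypothesis u_growing : Un_growing u.

Lemma bracket_largest T i j : u j <= T < u (S j) -> u i <= T -> (i <= j)%nat.
Proof.
  intros [_ HT] Hi; destruct (le_lt_dec i j) as [|Hji]; [assumption|].
  pose proof (growing_prop u i (S j) u_growing Hji); lra.
Qed.

Lemma bracket_pos T j : u j <= T < u (S j) -> (0 < j)%nat <-> u 1 <= T.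
Proof.
  intros Hj; split; intros Hpos.
  - pose proof (growing_prop u j 1 u_growing Hpos); lra.
  - exact (bracket_largest T 1 j Hj Hpos).
Qed.

End Bracket.

Lemma sum_f_R0_ge_term (F : nat -> R) N i :
  (forall j, 0 <= F j) -> (i <= N)%nat -> F i <= sum_f_R0 F N.
Proof.
  intros HF; induction N as [|N IH]; intros Hi; simpl.
  - replace i with 0%nat by lia; lra.
  - destruct (Nat.eq_dec i (S N)) as [-> | Hne].
    + pose proof (cond_pos_sum F N HF); lra.
    + pose proof (IH ltac:(lia)); pose proof (HF (S N)); lra.
Qed.

Lemma C_nonneg n p : 0 <= C n p.
Proof.
  unfold C; apply Rle_mult_inv_pos; [apply pos_INR|].
  apply Rmult_lt_0_compat; apply INR_fact_lt_0.
Qed.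

Lemma C_diag n : C n n = 1.
Proof.
  unfold C; rewrite Nat.sub_diag; simpl (INR (fact 0)).
  field; apply INR_fact_neq_0.
Qed.

Lemma C_succ n j : C (n + S j) n = C (n + j) n * (INR (n + S j) / INR (S j)).
Proof.
  unfold C.
  replace (n + S j - n)%nat with (S j) by lia.
  replace (n + j - n)%nat with j by lia.
  rewrite <- plus_n_Sm, !fact_simpl, !mult_INR.
  field; repeat split; try apply INR_fact_neq_0; apply not_0_INR; lia.
Qed.

Lemma C_succ_diag n : C (n + 1) n = INR n + 1.
Proof.
  rewrite (C_succ n 0), Nat.add_0_r, C_diag, plus_INR; simpl; field.
Qed.

Lemma C_ge_succ n j : (0 < n)%nat -> INR j + 1 <= C (n + j) n.
Proof.
  intros Hn; induction j as [|j IH].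
  - rewrite Nat.add_0_r, C_diag; simpl; lra.
  - assert (Hr : 0 <= INR (n + S j) / INR (S j)).
    { apply Rle_mult_inv_pos; [apply pos_INR | apply lt_0_INR; lia]. }
    rewrite C_succ.
    apply Rle_trans with ((INR j + 1) * (INR (n + S j) / INR (S j))).
    + replace ((INR j + 1) * (INR (n + S j) / INR (S j))) with (INR (n + S j))
        by (rewrite <- S_INR; field; apply not_0_INR; lia).
      rewrite plus_INR, S_INR; pose proof (le_INR 1 n ltac:(lia)); simpl in *; lra.
    + now apply Rmult_le_compat_r.
Qed.

Lemma binomial_term_le n m x : 0 <= x -> C (n + m) n * x ^ m <= (1 + x) ^ (n + m).
Proof.
  intros Hx; rewrite binomial.
  set (F i := C (n + m) i * 1 ^ i * x ^ (n + m - i)).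
  replace (C (n + m) n * x ^ m) with (F n)
    by (unfold F; rewrite pow1; replace (n + m - n)%nat with m by lia; ring).
  apply sum_f_R0_ge_term; [|lia].
  intros i; unfold F; rewrite pow1, Rmult_1_r.
  apply Rmult_le_pos; [apply C_nonneg | now apply pow_le].
Qed.

Definition wbinom (c : R) (n j : nat) : R := c ^ j * C (n + j) n.

Lemma wbinom_0 c n : wbinom c n 0 = 1.
Proof. unfold wbinom; rewrite Nat.add_0_r, C_diag; ring. Qed.

Lemma wbinom_1 c n : wbinom c n 1 = c * (INR n + 1).
Proof. unfold wbinom; rewrite C_succ_diag; ring. Qed.

Lemma wbinom_growing c n : 1 <= c -> Un_growing (wbinom c n).
Proof.
  intros Hc j; unfold wbinom; rewrite C_succ.
  replace (INR (n + S j) / INR (S j)) with (1 + INR n / INR (S j))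
    by (rewrite plus_INR; field; apply not_0_INR; lia).
  assert (Hq : 0 <= INR n / INR (S j)).
  { apply Rle_mult_inv_pos; [apply pos_INR | apply lt_0_INR; lia]. }
  assert (HX : 0 <= c ^ j * C (n + j) n).
  { apply Rmult_le_pos; [apply pow_le; lra | apply C_nonneg]. }
  set (X := c ^ j * C (n + j) n) in *.
  replace (c ^ S j * (C (n + j) n * (1 + INR n / INR (S j))))
    with (c * (X * (1 + INR n / INR (S j)))) by (unfold X; simpl; ring).
  assert (X <= X * (1 + INR n / INR (S j))) by nra.
  assert (X * (1 + INR n / INR (S j)) <= c * (X * (1 + INR n / INR (S j)))) by nra.
  lra.
Qed.

Lemma wbinom_unbounded c n T : 1 <= c -> (0 < n)%nat -> exists N, T < wbinom c n N.
Proof.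
  intros Hc Hn; destruct (INR_unbounded T) as [N HN]; exists N; unfold wbinom.
  pose proof (C_ge_succ n N Hn); pose proof (pow_R1_Rle c N Hc); pose proof (pos_INR N).
  nra.
Qed.

Lemma wbinom_bracket c n T : 1 <= c -> (0 < n)%nat -> 1 <= T ->
  exists j, wbinom c n j <= T < wbinom c n (S j).
Proof.
  intros Hc Hn HT; destruct (wbinom_unbounded c n T Hc Hn) as [N HN].
  apply (bracket_exists _ T N); [rewrite wbinom_0|]; assumption.
Qed.

Lemma k_spec n t : 1 <= t -> (0 < n)%nat ->
  wbinom 1 n (k n t) <= t ^ n < wbinom 1 n (S (k n t)).
Proof.
  intros Ht Hn; unfold wbinom; rewrite !pow1, !Rmult_1_l.
  replace (n + S (k n t))%nat with (n + k n t + 1)%nat by lia.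
  unfold k; apply epsilon_spec.
  destruct (wbinom_bracket 1 n (t ^ n) (Rle_refl 1) Hn (pow_R1_Rle t n Ht)) as [j Hj].
  exists j; unfold wbinom in Hj; rewrite !pow1, !Rmult_1_l in Hj.
  replace (n + j + 1)%nat with (n + S j)%nat by lia.
  exact Hj.
Qed.

Lemma l_spec n t : 1 <= t -> (0 < n)%nat ->
  wbinom 2 n (l n t) <= t ^ n < wbinom 2 n (S (l n t)).
Proof.
  intros Ht Hn; unfold wbinom.
  replace (n + S (l n t))%nat with (n + l n t + 1)%nat by lia.
  replace (S (l n t)) with (l n t + 1)%nat by lia.
  unfold l; apply epsilon_spec.
  destruct (wbinom_bracket 2 n (t ^ n) ltac:(lra) Hn (pow_R1_Rle t n Ht)) as [j Hj].
  exists j; unfold wbinom in Hj.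
  replace (n + j + 1)%nat with (n + S j)%nat by lia.
  replace (j + 1)%nat with (S j) by lia.
  exact Hj.
Qed.

Lemma exp_le u v : u <= v -> exp u <= exp v.
Proof. intros [Huv | ->]; [left; now apply exp_increasing | lra]. Qed.

Lemma exp_pow u n : exp u ^ n = exp (INR n * u).
Proof.
  induction n as [|n IH]; simpl pow; [now rewrite Rmult_0_l, exp_0|].
  rewrite IH, <- exp_plus, S_INR; f_equal; ring.
Qed.

Lemma ln_ge_0 x : 1 <= x -> 0 <= ln x.
Proof. intros Hx; rewrite <- ln_1; apply ln_le; lra. Qed.

Lemma ln_le_sub_1 x : 0 < x -> ln x <= x - 1.
Proof. intros Hx; pose proof (exp_ineq1_le (ln x)); rewrite exp_ln in *; lra. Qed.

Lemma sqr_ln_sqr_ge s : 0 < s <= 1 -> - (2 * s) <= s ^ 2 * ln (s ^ 2).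
Proof.
  intros Hs; rewrite ln_pow by lra.
  assert (Hln : 1 - / s <= ln s).
  { pose proof (ln_le_sub_1 (/ s) ltac:(apply Rinv_0_lt_compat; lra)).
    rewrite ln_Rinv in *; lra. }
  assert (Hss : s ^ 2 * / s = s) by (field; lra).
  simpl INR; nra.
Qed.

Definition Phi (c x : R) : R := x * ln c + (1 + x) * ln (1 + x) - x * ln x.

Lemma f_Phi x : f x = exp (Phi 1 x).
Proof.
  unfold f, Phi, Rpower; rewrite ln_1, Rmult_0_r, Rplus_0_l.
  unfold Rminus, Rdiv; now rewrite exp_plus, exp_Ropp.
Qed.

Lemma g_Phi x : g x = exp (Phi 2 x).
Proof.
  unfold g, Phi, Rpower; unfold Rminus, Rdiv.
  now rewrite !exp_plus, exp_Ropp.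
Qed.

Lemma wbinom_le_exp_Phi c x n m : 1 <= c -> 0 < x -> INR m <= x * INR n ->
  wbinom c n m <= exp (Phi c x) ^ n.
Proof.
  intros Hc Hx Hm.
  set (L := INR m * ln c + INR (n + m) * ln (1 + x) - INR m * ln x).
  assert (HL : exp L = c ^ m * (1 + x) ^ (n + m) / x ^ m).
  { unfold L, Rminus, Rdiv; rewrite !exp_plus, exp_Ropp, <- !ln_pow by lra.
    rewrite !exp_ln; [reflexivity | apply pow_lt; lra ..]. }
  assert (Hbin : wbinom c n m <= exp L).
  { rewrite HL; unfold wbinom, Rdiv.
    assert (Hxm : 0 < x ^ m) by (apply pow_lt; lra).
    pose proof (binomial_term_le n m x ltac:(lra)).
    apply (Rmult_le_reg_r (x ^ m)); [exact Hxm|].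
    replace (c ^ m * (1 + x) ^ (n + m) * / x ^ m * x ^ m)
      with (c ^ m * (1 + x) ^ (n + m)) by (field; lra).
    rewrite Rmult_assoc; apply Rmult_le_compat_l; [apply pow_le|]; lra. }
  assert (Hexp : L <= INR n * Phi c x).
  { pose proof (ln_ge_0 c Hc).
    pose proof (ln_increasing x (1 + x) Hx ltac:(lra)).
    assert (0 <= (x * INR n - INR m) * (ln c + ln (1 + x) - ln x))
      by (apply Rmult_le_pos; lra).
    assert (INR n * Phi c x - L = (x * INR n - INR m) * (ln c + ln (1 + x) - ln x))
      by (unfold L, Phi; rewrite plus_INR; ring).
    lra. }
  rewrite exp_pow; apply Rle_trans with (exp L); [exact Hbin | now apply exp_le].
Qed.

Lemma Phi_gt_ln_succ c x : 1 <= c -> 0 < x -> ln (1 + x) < Phi c x.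
Proof.
  intros Hc Hx; unfold Phi.
  pose proof (ln_ge_0 c Hc); pose proof (ln_increasing x (1 + x) Hx ltac:(lra)).
  nra.
Qed.

Lemma Phi_small c e : 1 <= c -> 0 < e -> exists x, 0 < x /\ Phi c x < e.
Proof.
  intros Hc He; pose proof (ln_ge_0 c Hc) as Hlc.
  set (s := Rmin 1 (e / (2 * (ln c + 4)))).
  assert (Hs : 0 < s <= 1).
  { split; [apply Rmin_glb_lt; [lra | apply Rdiv_lt_0_compat; lra] | apply Rmin_l]. }
  assert (Hse : s * (ln c + 4) <= e / 2).
  { apply Rle_trans with (e / (2 * (ln c + 4)) * (ln c + 4)).
    - apply Rmult_le_compat_r; [lra | apply Rmin_r].
    - right; field; lra. }
  exists (s ^ 2); split; [apply pow_lt; lra|].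
  pose proof (sqr_ln_sqr_ge s Hs).
  set (x := s ^ 2) in *.
  assert (Hxs : 0 < x <= s) by (unfold x; simpl; nra).
  assert (Hl1 : 0 <= ln (1 + x) <= x).
  { split; [apply ln_ge_0; lra | pose proof (ln_le_sub_1 (1 + x)); lra]. }
  assert (x * ln c <= s * ln c) by nra.
  assert ((1 + x) * ln (1 + x) <= 2 * s) by nra.
  unfold Phi; lra.
Qed.

Lemma Phi_continuous c x : 0 < x -> continuity_pt (Phi c) x.
Proof.
  intros Hx; apply continuity_pt_filterlim.
  apply (ex_derive_continuous (K := R_AbsRing) (V := R_NormedModule)).
  unfold Phi; auto_derive; lra.
Qed.

Lemma exp_Phi_surjective c t : 1 <= c -> 1 < t -> exists x, 0 < x /\ exp (Phi c x) = t.
Proof.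
  intros Hc Ht.
  assert (Hy : 0 < ln t) by (rewrite <- ln_1; apply ln_increasing; lra).
  destruct (Phi_small c (ln t) Hc Hy) as [x0 [Hx0 Hlow]].
  set (x1 := x0 + exp (ln t)).
  assert (Hx01 : x0 < x1) by (unfold x1; pose proof (exp_pos (ln t)); lra).
  assert (Hup : ln t < Phi c x1).
  { apply Rlt_trans with (ln (1 + x1)); [|apply Phi_gt_ln_succ; lra].
    rewrite <- (ln_exp (ln t)) at 1.
    apply ln_increasing; [apply exp_pos | unfold x1; lra]. }
  destruct (Ranalysis5.IVT_interv (fun x => Phi c x - ln t) x0 x1) as [z [Hz Hz0]].
  - intros x Hx; apply (continuity_pt_minus (Phi c) (fun _ => ln t)).
    + apply Phi_continuous; lra.
    + now apply continuity_pt_const.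
  - exact Hx01.
  - lra.
  - lra.
  - exists z; split; [lra|].
    replace (Phi c z) with (ln t) by lra.
    apply exp_ln; lra.
Qed.

Lemma a_spec t : 1 < t -> 0 < a t /\ f (a t) = t.
Proof.
  intros Ht; unfold a; apply epsilon_spec.
  destruct (exp_Phi_surjective 1 t ltac:(lra) Ht) as [x Hx].
  exists x; now rewrite f_Phi.
Qed.

Lemma b_spec t : 1 < t -> 0 < b t /\ g (b t) = t.
Proof.
  intros Ht; unfold b; apply epsilon_spec.
  destruct (exp_Phi_surjective 2 t ltac:(lra) Ht) as [x Hx].
  exists x; now rewrite g_Phi.
Qed.

Lemma floor_le_bracket c x t n j : 1 <= c -> 0 < x -> exp (Phi c x) = t ->
  wbinom c n j <= t ^ n < wbinom c n (S j) -> (floorZ (x * INR n) <= Z.of_nat j)%Z.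
Proof.
  intros Hc Hx Hxt Hj; unfold floorZ.
  destruct (base_Int_part (x * INR n)) as [Hfl _].
  destruct (Z_le_gt_dec (Int_part (x * INR n)) 0) as [|Hz]; [lia|].
  set (z := Int_part (x * INR n)) in *.
  assert (Hm : INR (Z.to_nat z) <= x * INR n)
    by (rewrite INR_IZR_INZ, Z2Nat.id by lia; exact Hfl).
  pose proof (wbinom_le_exp_Phi c x n _ Hc Hx Hm) as Hle; rewrite Hxt in Hle.
  pose proof (bracket_largest _ (wbinom_growing c n Hc) _ _ _ Hj Hle); lia.
Qed.

Theorem lemma2p1 (t : R) (n : nat) :
  1 < t <= 2 -> (0 < n)%nat ->
  (floorZ (a t * INR n) <= Z.of_nat (k n t))%Z /\
  ((0 < k n t)%nat <-> INR n + 1 <= t ^ n) /\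
  (floorZ (b t * INR n) <= Z.of_nat (l n t))%Z /\
  ((0 < l n t)%nat <-> 2 * (INR n + 1) <= t ^ n).
Proof.
  intros [Ht _] Hn.
  destruct (a_spec t Ht) as [Ha Hfa]; rewrite f_Phi in Hfa.
  destruct (b_spec t Ht) as [Hb Hgb]; rewrite g_Phi in Hgb.
  pose proof (k_spec n t ltac:(lra) Hn) as Hk.
  pose proof (l_spec n t ltac:(lra) Hn) as Hl.
  split; [|split; [|split]].
  - exact (floor_le_bracket 1 (a t) t n _ ltac:(lra) Ha Hfa Hk).
  - rewrite (bracket_pos _ (wbinom_growing 1 n ltac:(lra)) _ _ Hk), wbinom_1, Rmult_1_l.
    reflexivity.
  - exact (floor_le_bracket 2 (b t) t n _ ltac:(lra) Hb Hgb Hl).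
  - now rewrite (bracket_pos _ (wbinom_growing 2 n ltac:(lra)) _ _ Hl), wbinom_1.
Qed.
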